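(* Let $0<a\le1\le b<\infty$, $\varphi(s)=\max\{s^a,s^b\}$ for $s>0$, let $c,d>0$ with $cd\le1$, and $g(x)=xF(c,d;c+d;x)$ for $x\in(0,1)$. Then for every $s>0$, $$g\!\left(\frac{\varphi(s)}{1+\varphi(s)}\right)\le\frac ba\max\left\{g^a\!\left(\frac{s}{1+s}\right),\ g\!\left(\frac{s}{1+s}\right)\right\}.$$
   Context: $F(a,b;c;x)$ is the Gaussian hypergeometric function $\sum_{n\ge0}\frac{(a)_n(b)_n}{(c)_n}\frac{x^n}{n!}$ ($|x|<1$), with $(a)_n=a(a+1)\cdots(a+n-1)$, $(a)_0=1$. Here $g^a(y)$ means $(g(y))^a$, and the exponents $a,b$ are distinct from the hypergeometric parameters $c,d$. *)

From Stdlib Require Import Reals Arith ClassicalEpsilon.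
Open Scope R_scope.

Fixpoint poch (a : R) (n : nat) : R :=
  match n with
  | O => 1
  | S k => poch a k * (a + INR k)
  end.

Definition hyp_term (a b c x : R) (n : nat) : R :=
  poch a n * poch b n / poch c n * x ^ n / INR (Factorial.fact n).

(* F(a,b;c;x) := sum of the series (chosen via classical choice;
   the series converges for |x| < 1 and c not a non-positive integer). *)
Definition hyp2F1 (a b c x : R) : R :=
  epsilon (inhabits 0) (fun l => infinite_sum (hyp_term a b c x) l).

Definition gfun (c d x : R) : R := x * hyp2F1 c d (c + d) x.

Definition phi (a b s : R) : R := Rmax (Rpower s a) (Rpower s b).

(* Put G(s) := g(s/(1+s)); the substitution x = s/(1+s) turns -ln(1-x)
   into ln(1+s).  Write g(x) = sum_n A_n x^(n+1) with A_0 = 1.  Because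
   cd <= 1, the weighted coefficients (n+1) A_n are nonincreasing, so
   comparing g with -ln(1-x) = sum_n x^(n+1)/(n+1) yields
   (1) G(s) <= ln(1+s), termwise, and
   (2) G(s)/ln(1+s) is nonincreasing in s, by a monotone-ratio lemma for
       power series (proved on partial sums, then passed to the limit).
   The theorem then follows from two elementary inequalities:
   - if s >= 1 then phi(s) = s^b and ln(1+s^b) <= b ln(1+s), so (2) gives
     G(s^b) <= b G(s);
   - if s <= 1 then phi(s) = s^a and a ln(1+s^a) <= ln(1+s)^a, so (2) and
     (1) give a G(s^a) <= G(s) ln(1+s)^(a-1) <= G(s)^a. *)

From Stdlib Require Import Reals Lra Lia Psatz ClassicalEpsilon.
From Coquelicot Require Import Coquelicot.
Open Scope R_scope.

Lemma exp_monotone x y : x <= y -> exp x <= exp y.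
Proof.
  intros [Hlt | ->]; [left; now apply exp_increasing | lra].
Qed.

Lemma Rpower_pos x e : 0 < Rpower x e.
Proof. apply exp_pos. Qed.

Lemma Rpower_split x e : 0 < x -> Rpower x e = x * Rpower x (e - 1).
Proof.
  intros Hx. replace e with (1 + (e - 1)) at 1 by ring.
  now rewrite Rpower_plus, Rpower_1.
Qed.

Lemma Rpower_antitone_base x y e :
  0 < x -> x <= y -> e <= 0 -> Rpower y e <= Rpower x e.
Proof.
  intros Hx Hxy He. apply exp_monotone.
  pose proof (ln_le x y Hx Hxy). nra.
Qed.

Lemma Rpower_antitone_exponent s e e' :
  0 < s <= 1 -> e <= e' -> Rpower s e' <= Rpower s e.
Proof.
  intros Hs He. apply exp_monotone.
  assert (ln s <= 0) by (rewrite <- ln_1; apply ln_le; lra). nra.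
Qed.

Lemma ln_le_sub1 y : 0 < y -> ln y <= y - 1.
Proof.
  intros Hy. pose proof (exp_ineq1_le (ln y)) as H. rewrite exp_ln in H; lra.
Qed.

Lemma ln1p_bounds s : 0 < s -> s / (1 + s) <= ln (1 + s) <= s /\ 0 < ln (1 + s).
Proof.
  intros Hs.
  pose proof (ln_le_sub1 (1 + s) ltac:(lra)) as Hup.
  pose proof (ln_le_sub1 (/ (1 + s)) ltac:(apply Rinv_0_lt_compat; lra)) as Hlow.
  rewrite ln_Rinv in Hlow by lra.
  assert (/ (1 + s) - 1 = - (s / (1 + s))) by (field; lra).
  assert (0 < s / (1 + s)) by (apply Rdiv_lt_0_compat; lra).
  repeat split; lra.
Qed.

(* u |-> ln(1+u)/u is nonincreasing on (0, oo): s ln(1+t) <= t ln(1+s). *)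
Lemma ln1p_ratio_antitone s t : 0 < s -> s <= t -> s * ln (1 + t) <= t * ln (1 + s).
Proof.
  intros Hs [Hst | ->]; [| lra].
  destruct (MVT_cor2 (fun u => u * ln (1 + s) - s * ln (1 + u))
                     (fun u => ln (1 + s) - s / (1 + u)) s t Hst) as [u [Hmvt Hu]].
  - intros u Hu. apply is_derive_Reals. auto_derive; [lra | field; lra].
  - assert (s / (1 + u) <= s / (1 + s)).
    { apply Rmult_le_compat_l; [lra | apply Rinv_le_contravar; lra]. }
    pose proof (ln1p_bounds s Hs). nra.
Qed.

Lemma ln1p_power_ge1 s b : 0 < s -> 1 <= b -> ln (1 + Rpower s b) <= b * ln (1 + s).
Proof.
  intros Hs Hb.
  rewrite <- ln_Rpower. pose proof (Rpower_pos s b).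
  apply ln_le; [lra|].
  rewrite (Rpower_split (1 + s) b), (Rpower_split s b) by lra.
  assert (H1 : Rpower (1 + s) 0 <= Rpower (1 + s) (b - 1)) by (apply Rle_Rpower; lra).
  rewrite Rpower_O in H1 by lra.
  assert (Rpower s (b - 1) <= Rpower (1 + s) (b - 1)) by (apply Rle_Rpower_l; lra).
  nra.
Qed.

Lemma ln1p_power_le1 s a :
  0 < s <= 1 -> 0 < a <= 1 -> a * ln (1 + Rpower s a) <= Rpower (ln (1 + s)) a.
Proof.
  intros Hs Ha.
  destruct (ln1p_bounds s ltac:(lra)) as [[_ Hls] Hl].
  assert (Hsa : s <= Rpower s a).
  { rewrite <- (Rpower_1 s) at 1 by lra. apply Rpower_antitone_exponent; lra. }
  assert (Hlt : 0 < ln (1 + Rpower s a)) by (apply ln1p_bounds, Rpower_pos).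
  (* ln(1+s^a) <= s^(a-1) ln(1+s) <= ln(1+s)^(a-1) ln(1+s) *)
  assert (Hk : ln (1 + Rpower s a) <= Rpower s (a - 1) * ln (1 + s)).
  { pose proof (ln1p_ratio_antitone s (Rpower s a) (proj1 Hs) Hsa) as K.
    apply (Rmult_le_reg_l s); [lra |].
    replace (s * (Rpower s (a - 1) * ln (1 + s))) with (Rpower s a * ln (1 + s))
      by (rewrite (Rpower_split s a) by lra; ring).
    exact K. }
  assert (Rpower s (a - 1) <= Rpower (ln (1 + s)) (a - 1))
    by (apply Rpower_antitone_base; lra).
  rewrite (Rpower_split (ln (1 + s)) a) by lra.
  nra.
Qed.

Lemma phi_ge1 a b s : a <= b -> 1 <= s -> phi a b s = Rpower s b.
Proof. intros Hab Hs. apply Rmax_right, Rle_Rpower; lra. Qed.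

Lemma phi_le1 a b s : a <= b -> 0 < s <= 1 -> phi a b s = Rpower s a.
Proof. intros Hab Hs. apply Rmax_left, Rpower_antitone_exponent; lra. Qed.

Lemma infinite_sum_ext f g l : (forall n, f n = g n) -> infinite_sum f l -> infinite_sum g l.
Proof.
  intros E H. apply is_series_Reals. apply is_series_Reals in H.
  now apply (is_series_ext f).
Qed.

Lemma infinite_sum_scal r f l : infinite_sum f l -> infinite_sum (fun n => r * f n) (r * l).
Proof.
  intros H. apply is_series_Reals. apply is_series_Reals in H.
  exact (is_series_scal_l (K := R_AbsRing) (V := R_NormedModule) r f l H).
Qed.

Lemma infinite_sum_le f g l1 l2 :
  (forall n, f n <= g n) -> infinite_sum f l1 -> infinite_sum g l2 -> l1 <= l2.
Proof.
  intros H H1 H2. exact (Rle_cv_lim (fun N => sum_growing f g N H) H1 H2).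
Qed.

Definition log_partial (N : nat) (u : R) : R :=
  sum_f_R0 (fun k => u ^ S k / INR (S k)) N.

Lemma log_monomial_derive n u : is_derive (fun u => u ^ S n / INR (S n)) u (u ^ n).
Proof.
  apply is_derive_Reals.
  replace (u ^ n) with (INR (S n) * u ^ Nat.pred (S n) * / INR (S n))
    by (simpl pred; field; apply not_0_INR; lia).
  apply (derivable_pt_lim_scal_right (fun u => u ^ S n)), derivable_pt_lim_pow.
Qed.

Lemma log_partial_derive N u : is_derive (log_partial N) u (sum_f_R0 (fun k => u ^ k) N).
Proof.
  induction N as [|N IH]; [apply log_monomial_derive |].
  apply (is_derive_plus (log_partial N)); [exact IH | apply log_monomial_derive].
Qed.

Lemma log_partial_0 N : log_partial N 0 = 0.
Proof.
  unfold log_partial.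
  induction N as [|N IH]; [simpl; field |].
  rewrite tech5, IH. cbv beta. rewrite pow_i by lia. unfold Rdiv. ring.
Qed.

Lemma log_remainder x N :
  0 < x < 1 -> 0 <= - ln (1 - x) - log_partial N x <= x ^ S N / (1 - x).
Proof.
  intros Hx.
  destruct (MVT_cor2 (fun u => - ln (1 - u) - log_partial N u)
              (fun u => / (1 - u) - sum_f_R0 (fun k => u ^ k) N) 0 x (proj1 Hx))
    as [u [Hmvt Hu]].
  - intros u Hu. apply is_derive_Reals.
    apply (is_derive_minus (fun u => - ln (1 - u)) (log_partial N)).
    + auto_derive; [lra | field; lra].
    + apply log_partial_derive.
  - assert (Hat0 : - ln (1 - 0) - log_partial N 0 = 0)
      by (rewrite log_partial_0, !Rminus_0_r, ln_1; ring).
    rewrite Hat0, tech3 in Hmvt by lra.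
    (* the derivative at u is u^(N+1)/(1-u), by the geometric sum *)
    assert (E : - ln (1 - x) - log_partial N x = u ^ S N * / (1 - u) * x).
    { transitivity (- ln (1 - x) - log_partial N x - 0); [ring | rewrite Hmvt; field; lra]. }
    assert (0 <= u ^ S N <= x ^ S N) by (split; [apply pow_le | apply pow_incr]; lra).
    assert (0 < / (1 - u) <= / (1 - x))
      by (split; [apply Rinv_0_lt_compat | apply Rinv_le_contravar]; lra).
    assert (u ^ S N * / (1 - u) <= x ^ S N * / (1 - x)) by (apply Rmult_le_compat; lra).
    assert (0 <= u ^ S N * / (1 - u)) by (apply Rmult_le_pos; lra).
    rewrite E. unfold Rdiv. split; [apply Rmult_le_pos; lra |].
    apply (Rle_trans _ (u ^ S N * / (1 - u))); [| assumption].
    rewrite <- (Rmult_1_r (u ^ S N * / (1 - u))) at 2. apply Rmult_le_compat_l; lra.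
Qed.

Lemma log_series x : 0 < x < 1 -> infinite_sum (fun k => x ^ S k / INR (S k)) (- ln (1 - x)).
Proof.
  intros Hx eps Heps.
  destruct (pow_lt_1_zero x ltac:(rewrite Rabs_right; lra) (eps * (1 - x)))
    as [N HN]; [nra |].
  exists N. intros n Hn. unfold R_dist.
  pose proof (log_remainder x n Hx) as Hrem. fold (log_partial n x).
  specialize (HN (S n) ltac:(lia)).
  rewrite Rabs_right in HN by (apply Rle_ge, pow_le; lra).
  assert (x ^ S n / (1 - x) < eps)
    by (apply (Rmult_lt_reg_r (1 - x)); [lra | unfold Rdiv; rewrite Rmult_assoc, Rinv_l; lra]).
  rewrite Rabs_left1; lra.
Qed.

(* Monotone-ratio lemma: if a_m b_k <= a_k b_m for k < m (the ratio a_n/b_n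
   is nonincreasing), then for 0 <= x <= y the power series
   P_a(z) = sum a_k z^(k+1), P_b(z) = sum b_k z^(k+1) satisfy
   P_a(y) P_b(x) <= P_a(x) P_b(y). *)

Lemma pow_cross x y k m :
  0 <= x <= y -> (k <= m)%nat -> y ^ k * x ^ m <= x ^ k * y ^ m.
Proof.
  intros Hxy Hkm. replace m with (k + (m - k))%nat by lia. rewrite !pow_add.
  assert (x ^ (m - k) <= y ^ (m - k)) by (apply pow_incr; lra).
  assert (0 <= x ^ k * y ^ k) by (apply Rmult_le_pos; apply pow_le; lra).
  nra.
Qed.

(* Effect of adding the m-th terms to partial sums of length N+1. *)
Lemma ratio_increment (a b : nat -> R) x y m N :
  a m * (x ^ S m * sum_f_R0 (fun k => b k * y ^ S k) N
         - y ^ S m * sum_f_R0 (fun k => b k * x ^ S k) N)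
  + b m * (y ^ S m * sum_f_R0 (fun k => a k * x ^ S k) N
           - x ^ S m * sum_f_R0 (fun k => a k * y ^ S k) N)
  = sum_f_R0 (fun k => (a k * b m - a m * b k) * (x ^ S k * y ^ S m - y ^ S k * x ^ S m)) N.
Proof.
  induction N as [|N IH]; simpl in *; [ring | rewrite <- IH; ring].
Qed.

Section MonotoneRatio.
Variables a b : nat -> R.
Hypothesis ratio_antitone : forall k m, (k < m)%nat -> a m * b k <= a k * b m.

Lemma monotone_ratio_partial x y N : 0 <= x <= y ->
  sum_f_R0 (fun k => a k * y ^ S k) N * sum_f_R0 (fun k => b k * x ^ S k) N <=
  sum_f_R0 (fun k => a k * x ^ S k) N * sum_f_R0 (fun k => b k * y ^ S k) N.
Proof.
  intros Hxy. induction N as [|N IH]; [simpl; nra |].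
  rewrite !tech5. cbv beta.
  assert (0 <= sum_f_R0 (fun k => (a k * b (S N) - a (S N) * b k)
                          * (x ^ S k * y ^ S (S N) - y ^ S k * x ^ S (S N))) N).
  { apply (Rle_trans _ (sum_f_R0 (fun _ => 0) N)); [rewrite sum_cte; lra |].
    apply sum_Rle; intros k Hk.
    pose proof (ratio_antitone k (S N) ltac:(lia)).
    pose proof (pow_cross x y (S k) (S (S N)) Hxy ltac:(lia)).
    apply Rmult_le_pos; lra. }
  rewrite <- ratio_increment in *. nra.
Qed.

Lemma monotone_ratio x y Pax Pay Pbx Pby : 0 <= x <= y ->
  infinite_sum (fun k => a k * x ^ S k) Pax -> infinite_sum (fun k => a k * y ^ S k) Pay ->
  infinite_sum (fun k => b k * x ^ S k) Pbx -> infinite_sum (fun k => b k * y ^ S k) Pby ->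
  Pay * Pbx <= Pax * Pby.
Proof.
  intros Hxy Hax Hay Hbx Hby.
  apply (Rle_cv_lim (fun N => monotone_ratio_partial x y N Hxy));
    now apply CV_mult.
Qed.
End MonotoneRatio.

Lemma poch_pos a n : 0 < a -> 0 < poch a n.
Proof. intros Ha. induction n; simpl; [lra | pose proof (pos_INR n); nra]. Qed.

(* The polynomial inequality behind the monotonicity of (n+1) A_n:
   (n+2)(c+n)(d+n) <= (n+1)^2 (c+d+n), i.e. (c+d-2cd) + n(1-cd) >= 0. *)
Lemma pochhammer_ratio_bound c d n :
  0 < c -> 0 < d -> c * d <= 1 -> 0 <= n ->
  (n + 2) * ((c + n) * (d + n)) <= (n + 1) * (n + 1) * (c + d + n).
Proof.
  intros Hc Hd Hcd Hn.
  assert (Hcd0 : 0 < c * d) by (apply Rmult_lt_0_compat; lra).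
  (* c + d >= 2 sqrt(cd) >= 2cd, using cd <= 1 *)
  assert (Hsq : (2 * (c * d)) * (2 * (c * d)) <= (c + d) * (c + d)).
  { pose proof (Rle_0_sqr (c - d)). unfold Rsqr in *. nra. }
  assert (Hamgm : 2 * (c * d) <= c + d) by nra.
  nra.
Qed.

Section Hypergeometric.
Variables c d : R.
Hypothesis hc : 0 < c.
Hypothesis hd : 0 < d.
Hypothesis hcd : c * d <= 1.

Definition hcoef (n : nat) : R :=
  poch c n * poch d n / poch (c + d) n / INR (Factorial.fact n).

Lemma hcoef_pos n : 0 < hcoef n.
Proof.
  pose proof (poch_pos c n hc). pose proof (poch_pos d n hd).
  pose proof (poch_pos (c + d) n ltac:(lra)). pose proof (INR_fact_lt_0 n).
  unfold hcoef, Rdiv. repeat apply Rmult_lt_0_compat; auto; now apply Rinv_0_lt_compat.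
Qed.

Lemma hcoef_0 : hcoef 0 = 1.
Proof. unfold hcoef. simpl. field. Qed.

Lemma hcoef_S n :
  hcoef (S n) = hcoef n * ((c + INR n) * (d + INR n) / ((c + d + INR n) * INR (S n))).
Proof.
  unfold hcoef. rewrite fact_simpl, mult_INR. simpl poch.
  pose proof (poch_pos (c + d) n ltac:(lra)). pose proof (INR_fact_neq_0 n).
  pose proof (pos_INR n). rewrite S_INR. field. repeat split; lra.
Qed.

(* (n+1) A_n is nonincreasing; this is where c d <= 1 enters. *)
Lemma weighted_hcoef_step n : INR (S (S n)) * hcoef (S n) <= INR (S n) * hcoef n.
Proof.
  rewrite hcoef_S, !S_INR.
  pose proof (hcoef_pos n). pose proof (pos_INR n).
  pose proof (pochhammer_ratio_bound c d (INR n) hc hd hcd ltac:(lra)).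
  assert (0 < (c + d + INR n) * (INR n + 1)) by nra.
  apply (Rmult_le_reg_r ((c + d + INR n) * (INR n + 1))); [lra |].
  replace (INR n + 1 + 1) with (INR n + 2) by ring.
  field_simplify; [| lra]. nra.
Qed.

Lemma weighted_hcoef_antitone k m : (k <= m)%nat -> INR (S m) * hcoef m <= INR (S k) * hcoef k.
Proof.
  induction 1 as [| m _ IH]; [lra |]. pose proof (weighted_hcoef_step m). lra.
Qed.

Lemma hcoef_le_log_coef n : hcoef n <= / INR (S n).
Proof.
  pose proof (weighted_hcoef_antitone 0 n ltac:(lia)) as H.
  rewrite hcoef_0 in H. simpl INR in H at 2.
  pose proof (lt_0_INR (S n) ltac:(lia)).
  apply (Rmult_le_reg_l (INR (S n))); [lra |]. rewrite Rinv_r; lra.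
Qed.

Lemma hcoef_ratio_antitone k m : (k < m)%nat -> hcoef m * / INR (S k) <= hcoef k * / INR (S m).
Proof.
  intros Hkm. pose proof (weighted_hcoef_antitone k m ltac:(lia)).
  pose proof (lt_0_INR (S k) ltac:(lia)). pose proof (lt_0_INR (S m) ltac:(lia)).
  apply (Rmult_le_reg_r (INR (S k) * INR (S m))); [nra |].
  field_simplify; lra.
Qed.

(* The defining series of F converges on [0, 1) (dominated by the geometric
   series), so hyp2F1 is its sum and g(x) = sum_n A_n x^(n+1). *)
Lemma hyp2F1_series x : 0 <= x < 1 -> infinite_sum (fun n => hcoef n * x ^ n) (hyp2F1 c d (c + d) x).
Proof.
  intros Hx.
  assert (Hterm : forall n, hyp_term c d (c + d) x n = hcoef n * x ^ n).
  { intros n. unfold hyp_term, hcoef.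
    pose proof (poch_pos (c + d) n ltac:(lra)). pose proof (INR_fact_neq_0 n). field; lra. }
  assert (Hex : exists l, infinite_sum (hyp_term c d (c + d) x) l).
  { destruct (Rseries_CV_comp (fun n => hcoef n * x ^ n) (fun n => 1 * x ^ n)) as [l Hl].
    - intros n. pose proof (hcoef_pos n). pose proof (hcoef_le_log_coef n).
      pose proof (pow_le x n (proj1 Hx)).
      assert (/ INR (S n) <= 1).
      { rewrite <- Rinv_1. apply Rinv_le_contravar; [lra |].
        rewrite S_INR. pose proof (pos_INR n). lra. }
      nra.
    - exists (/ (1 - x)). apply GP_infinite. rewrite Rabs_right; lra.
    - exists l. apply (infinite_sum_ext (fun n => hcoef n * x ^ n)); auto. }
  apply (infinite_sum_ext (hyp_term c d (c + d) x)); [exact Hterm |].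
  exact (epsilon_spec (inhabits 0) _ Hex).
Qed.

Lemma gfun_series x : 0 <= x < 1 -> infinite_sum (fun n => hcoef n * x ^ S n) (gfun c d x).
Proof.
  intros Hx. apply (infinite_sum_ext (fun n => x * (hcoef n * x ^ n))); [intros; simpl; ring |].
  now apply infinite_sum_scal, hyp2F1_series.
Qed.

Definition Gs (s : R) : R := gfun c d (s / (1 + s)).

Lemma ratio_substitution s :
  0 < s -> 0 < s / (1 + s) < 1 /\ - ln (1 - s / (1 + s)) = ln (1 + s).
Proof.
  intros Hs. split.
  - split; [apply Rdiv_lt_0_compat; lra |].
    apply (Rmult_lt_reg_r (1 + s)); [lra |]. field_simplify; lra.
  - replace (1 - s / (1 + s)) with (/ (1 + s)) by (field; lra).
    rewrite ln_Rinv by lra. ring.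
Qed.

Lemma log_series_shifted s :
  0 < s -> infinite_sum (fun n => / INR (S n) * (s / (1 + s)) ^ S n) (ln (1 + s)).
Proof.
  intros Hs. destruct (ratio_substitution s Hs) as [Hx <-].
  apply (infinite_sum_ext (fun k => (s / (1 + s)) ^ S k / INR (S k)));
    [intros; unfold Rdiv; ring | now apply log_series].
Qed.

Lemma Gs_series s : 0 < s -> infinite_sum (fun n => hcoef n * (s / (1 + s)) ^ S n) (Gs s).
Proof. intros Hs. apply gfun_series. pose proof (ratio_substitution s Hs). lra. Qed.

Lemma Gs_le_ln s : 0 < s -> Gs s <= ln (1 + s).
Proof.
  intros Hs. destruct (ratio_substitution s Hs) as [Hx _].
  eapply infinite_sum_le; [| exact (Gs_series s Hs) | exact (log_series_shifted s Hs)].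
  intros n; cbv beta. apply Rmult_le_compat_r; [apply pow_le; lra | apply hcoef_le_log_coef].
Qed.

(* G(s) >= s/(1+s) > 0: the leading term of a series with positive terms. *)
Lemma Gs_pos s : 0 < s -> 0 < Gs s.
Proof.
  intros Hs. destruct (ratio_substitution s Hs) as [Hx _].
  assert (H : sum_f_R0 (fun n => hcoef n * (s / (1 + s)) ^ S n) 0 <= Gs s).
  { apply sum_incr; [exact (Gs_series s Hs) | intros n].
    pose proof (hcoef_pos n). apply Rmult_le_pos; [lra | apply pow_le; lra]. }
  simpl in H. rewrite hcoef_0 in H. lra.
Qed.

Lemma Gs_ratio_antitone s t : 0 < s -> s <= t -> Gs t * ln (1 + s) <= Gs s * ln (1 + t).
Proof.
  intros Hs Hst.
  assert (s / (1 + s) <= t / (1 + t)).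
  { apply (Rmult_le_reg_r ((1 + s) * (1 + t))); [nra |]. field_simplify; lra. }
  apply (monotone_ratio hcoef (fun k => / INR (S k)) hcoef_ratio_antitone
           (s / (1 + s)) (t / (1 + t))).
  - pose proof (ratio_substitution s Hs). lra.
  - apply Gs_series; lra.
  - apply Gs_series; lra.
  - apply log_series_shifted; lra.
  - apply log_series_shifted; lra.
Qed.

Lemma Gs_power_ge1 s b : 1 <= s -> 1 <= b -> Gs (Rpower s b) <= b * Gs s.
Proof.
  intros Hs Hb.
  assert (Hsb : s <= Rpower s b) by (rewrite <- (Rpower_1 s) at 1 by lra; apply Rle_Rpower; lra).
  pose proof (Gs_ratio_antitone s (Rpower s b) ltac:(lra) Hsb).
  pose proof (ln1p_power_ge1 s b ltac:(lra) Hb).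
  pose proof (Gs_pos s ltac:(lra)). pose proof (ln1p_bounds s ltac:(lra)).
  apply (Rmult_le_reg_r (ln (1 + s))); nra.
Qed.

Lemma Gs_power_le1 s a : 0 < s <= 1 -> 0 < a <= 1 -> a * Gs (Rpower s a) <= Rpower (Gs s) a.
Proof.
  intros Hs Ha.
  assert (Hsa : s <= Rpower s a).
  { rewrite <- (Rpower_1 s) at 1 by lra. apply Rpower_antitone_exponent; lra. }
  pose proof (Gs_ratio_antitone s (Rpower s a) (proj1 Hs) Hsa) as Hratio.
  pose proof (ln1p_power_le1 s a Hs Ha) as Hln.
  pose proof (Gs_pos s (proj1 Hs)) as HG. pose proof (Gs_le_ln s (proj1 Hs)) as HGl.
  destruct (ln1p_bounds s (proj1 Hs)) as [_ Hl].
  (* ln(1+s)^(a-1) <= G(s)^(a-1), since G(s) <= ln(1+s) and a-1 <= 0 *)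
  assert (Rpower (ln (1 + s)) (a - 1) <= Rpower (Gs s) (a - 1))
    by (apply Rpower_antitone_base; lra).
  rewrite (Rpower_split (ln (1 + s)) a) in Hln by lra.
  rewrite (Rpower_split (Gs s) a) by lra.
  apply (Rmult_le_reg_r (ln (1 + s))); [lra |].
  (* a G(s^a) l <= a G(s) ln(1+s^a) <= G(s) l^a = G(s) l l^(a-1) <= G(s) l G(s)^(a-1) *)
  apply (Rle_trans _ (Gs s * (a * ln (1 + Rpower s a)))).
  { rewrite Rmult_assoc. replace (Gs s * (a * ln (1 + Rpower s a)))
      with (a * (Gs s * ln (1 + Rpower s a))) by ring.
    apply Rmult_le_compat_l; lra. }
  apply (Rle_trans _ (Gs s * (ln (1 + s) * Rpower (ln (1 + s)) (a - 1)))).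
  { apply Rmult_le_compat_l; lra. }
  replace (Gs s * Rpower (Gs s) (a - 1) * ln (1 + s))
    with (Gs s * (ln (1 + s) * Rpower (Gs s) (a - 1))) by ring.
  apply Rmult_le_compat_l; [lra |]. apply Rmult_le_compat_l; lra.
Qed.
End Hypergeometric.

(* The theorem: split at s = 1, where phi switches from s^a to s^b. *)
Theorem mainTheorem11 (a b c d : R)
  (ha0 : 0 < a) (ha1 : a <= 1) (hb1 : 1 <= b)
  (hc : 0 < c) (hd : 0 < d) (hcd : c * d <= 1) :
  forall s : R, 0 < s ->
    gfun c d (phi a b s / (1 + phi a b s)) <=
      b / a * Rmax (Rpower (gfun c d (s / (1 + s))) a) (gfun c d (s / (1 + s))).
Proof.
  intros s Hs.
  fold (Gs c d s) (Gs c d (phi a b s)).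
  pose proof (Gs_pos c d hc hd hcd s Hs) as HG.
  assert (Hba : b <= b / a).
  { apply (Rmult_le_reg_r a); [lra |]. unfold Rdiv.
    rewrite Rmult_assoc, Rinv_l by lra. nra. }
  assert (Hba' : / a <= b / a).
  { unfold Rdiv. rewrite <- (Rmult_1_l (/ a)) at 1.
    apply Rmult_le_compat_r; [apply Rlt_le, Rinv_0_lt_compat |]; lra. }
  destruct (Rle_lt_dec 1 s) as [Hs1 | Hs1].
  -
    rewrite phi_ge1 by lra.
    apply (Rle_trans _ (b * Gs c d s)); [now apply Gs_power_ge1 |].
    pose proof (Rmax_r (Rpower (Gs c d s) a) (Gs c d s)).
    apply Rmult_le_compat; lra.
  -
    rewrite phi_le1 by lra.
    apply (Rle_trans _ (/ a * Rpower (Gs c d s) a)).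
    { pose proof (Gs_power_le1 c d hc hd hcd s a ltac:(lra) ltac:(lra)).
      apply (Rmult_le_reg_l a); [lra |]. rewrite <- Rmult_assoc, Rinv_r; lra. }
    pose proof (Rmax_l (Rpower (Gs c d s) a) (Gs c d s)).
    pose proof (Rpower_pos (Gs c d s) a). pose proof (Rinv_0_lt_compat a ha0).
    apply Rmult_le_compat; lra.
Qed.
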